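(* (1) For $[P]\in G(3,V)$ (a plane in $\mathbb P^6$), the subspace $L^2_P:=\{Q\in H^0(\mathcal O_{\mathbb P^6}(2)):P\subset\{Q=0\}\}$ has codimension $6$ in $H^0(\mathcal O_{\mathbb P^6}(2))$. For planes $P\neq P'$, the subspace $L^2_{P,P'}:=\{Q\in H^0(\mathcal O_{\mathbb P^6}(2)):P\cup P'\subset\{Q=0\}\}$ has codimension $6$ in $L^2_P$ if $P\cap P'=\emptyset$, codimension $5$ if $P\cap P'$ is a point, and codimension $3$ if $P\cap P'$ is a line. (2) Let $X\subset\mathbb P^6$ be a smooth cubic $5$-fold with $F_2(X)$ a smooth surface. For $[P]\neq[P']\in F_2(X)$ with $P\cap P'$ a line, $\dim(J_{X,2}\cap L^2_{P,P'})\ge1$, and if $X$ is general, $\dim(J_{X,2}\cap L^2_{P,P'})\ge2$. Consequently $(J_{X,2}\cap L^2_P)+L^2_{P,P'}\subsetneq L^2_P$, and for $X$ general this subspace has codimension at least $2$ in $L^2_P$.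
   Context: $H^0(\mathcal O_{\mathbb P^6}(2))$ is the space of quadratic forms in the coordinates $X_0,\dots,X_6$ of $\mathbb P^6$. For a cubic $X=\{\mathrm{eq}_X=0\}$, $J_{X,2}\subset H^0(\mathcal O_{\mathbb P^6}(2))$ is the degree $2$ part of the Jacobian ideal, spanned by the partial derivatives $\partial\mathrm{eq}_X/\partial X_i$, $i=0,\dots,6$. $F_2(X)$ is the variety of planes contained in $X$. (For $[P]\in F_2(X)$ smooth point, $\dim(J_{X,2}\cap L^2_P)=3$.) *)

From HB Require Import structures.
From mathcomp Require Import all_boot all_order all_algebra.
From mathcomp Require Import mpoly.
Set Implicit Arguments. Unset Strict Implicit. Unset Printing Implicit Defensive.
Import GRing.Theory.
Local Open Scope ring_scope.

Section LinAlg.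
Variables (K : fieldType) (W : lmodType K).

Definition indep_mod (A : W -> Prop) (k : nat) (w : 'I_k -> W) :=
  forall a : 'I_k -> K, A (\sum_(i < k) a i *: w i) -> forall i, a i = 0.

Definition codim (A B : W -> Prop) (c : nat) :=
  exists w : 'I_c -> W, [/\ forall i, B (w i), indep_mod A w &
    forall b, B b -> exists a : 'I_c -> K, A (b - \sum_(i < c) a i *: w i)].

Definition codim_ge (A B : W -> Prop) (c : nat) :=
  exists w : 'I_c -> W, (forall i, B (w i)) /\ indep_mod A w.

Definition dim_ge (S : W -> Prop) (k : nat) := codim_ge (fun x => x = 0) S k.

Definition sub_inter (A B : W -> Prop) : W -> Prop := fun x => A x /\ B x.
Definition sub_sum (A B : W -> Prop) : W -> Prop :=
  fun x => exists a b, [/\ A a, B b & x = a + b].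
Definition proper_subspace (A B : W -> Prop) :=
  (forall x, A x -> B x) /\ exists x, B x /\ ~ A x.
End LinAlg.

Section Geometry.
Variable F : fieldType.
Local Notation V := 'rV[F]_7.            (* V = F^7, P^6 = P(V) *)
Local Notation poly7 := {mpoly F[7]}.

Definition pt (v : V) : 'I_7 -> F := fun i => v 0 i.

Definition is_plane (P : {vspace V}) := \dim P = 3%N.

Definition H2 : poly7 -> Prop := fun Q => Q \is 2.-homog.

Definition L2 (P : {vspace V}) : poly7 -> Prop :=
  fun Q => Q \is 2.-homog /\ forall v, v \in P -> Q.@[pt v] = 0.

Definition L2pair (P P' : {vspace V}) : poly7 -> Prop :=
  sub_inter (L2 P) (L2 P').

Definition J2 (f : poly7) : poly7 -> Prop :=
  fun Q => exists c : 'I_7 -> F, Q = \sum_(i < 7) c i *: mderiv i f.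

Definition smooth_cubic (f : poly7) :=
  [/\ f \is 3.-homog, f != 0 &
      forall x : 'I_7 -> F, (forall i, (mderiv i f).@[x] = 0) ->
        forall i, x i = 0].

Definition inF2 (f : poly7) (P : {vspace V}) :=
  is_plane P /\ forall v, v \in P -> f.@[pt v] = 0.

(* Zariski tangent space of the Fano scheme F_2(X) at [P]:
   T = Hom(P, V/P)-classes of first-order deformations, realized as
   T_F(f,P) / K(P) with T_F = {phi : V -> V | forall v in P, df_v(phi v) = 0}
   and K(P) = {phi | phi(P) <= P}. *)
Definition dgrad (f : poly7) (v w : V) : F :=
  \sum_(i < 7) (mderiv i f).@[pt v] * w 0 i.
Definition TF (f : poly7) (P : {vspace V}) : 'M[F]_7 -> Prop :=
  fun phi => forall v, v \in P -> dgrad f v (v *m phi) = 0.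
Definition KP (P : {vspace V}) : 'M[F]_7 -> Prop :=
  fun phi => forall v, v \in P -> v *m phi \in P.

(* F_2(X) is a smooth surface: nonempty and its Zariski tangent space has
   dimension 2 at every point *)
Definition F2_smooth_surface (f : poly7) :=
  (exists P, inF2 f P) /\ forall P, inF2 f P -> codim (KP P) (TF f P) 2.

(* "general" cubic: holds on a nonempty Zariski-open subset of the space of
   cubic forms (given by the nonvanishing of a polynomial in the coefficients) *)
Definition NC := #|{: 'X_{1..7 < 4}}|.
Definition coefs (f : poly7) : 'I_NC -> F := fun i => f@_(enum_val i).
Definition for_general_cubic (Pr : poly7 -> Prop) :=
  exists g : {mpoly F[NC]},
    (exists f0, f0 \is 3.-homog /\ g.@[coefs f0] != 0) /\
    forall f, f \is 3.-homog -> g.@[coefs f] != 0 -> Pr f.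
End Geometry.

From HB Require Import structures.
From mathcomp Require Import all_boot all_order all_algebra.
From mathcomp Require Import mpoly.
From mathcomp Require Import ring.
Import GRing.Theory.
Local Open Scope ring_scope.

(* Part (1) is an instance of a general count.  For subspaces T, S of V with
   n = dim S and d = dim (S :&: T), choose a basis u of S whose first d vectors
   span S :&: T, and linear forms y dual to u whose last n - d members vanish on
   T.  A quadric through T restricts to S as sum_(i <= j) c_ij s_i s_j, and the
   coefficients c_ij with j >= d are linear coordinates on L2 T / L2pair T S,
   with dual basis the products y_i y_j (quadric_vanish_span, L2pair_coords).
   Hence the codimension is sum_(d <= j < n) (j + 1), i.e. 6, 6, 5, 3 for a plane
   and d = 0 (and T = 0), 0, 1, 2.

   Part (2): by Taylor expansion along lines, the derivatives D_c f along vectors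
   c of a plane P of X vanish on P; by Euler's formula and smoothness of X, c |-> D_c f
   is injective.  So the D_l f, l in P :&: P', give dim (P :&: P') = 2 independent
   elements of J_{X,2} :&: L2pair P P'.  Smoothness of F_2(X) (tangent space of
   dimension 2 < 3) forces J_{X,2} :&: L2 P to consist of the D_c f with c in P,
   which modulo L2pair P P' span at most the line of D_p f (p in P \ P').  As
   L2 P / L2pair P P' has dimension 3, the sum has codimension at least 2
   (codim_ge_mod_line).  These bounds hold for every smooth X with smooth F_2(X),
   in particular for a general one. *)

Set Implicit Arguments. Unset Strict Implicit. Unset Printing Implicit Defensive.
Section Quotients.
Variables (K : fieldType) (W : lmodType K).
Implicit Types (A B : W -> Prop).

Definition subspace B :=
  [/\ B 0, forall x y, B x -> B y -> B (x + y) & forall a x, B x -> B (a *: x)].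

Lemma subspace_lincomb B n (a : 'I_n -> K) (x : 'I_n -> W) :
  subspace B -> (forall i, B (x i)) -> B (\sum_i a i *: x i).
Proof.
by case=> B0 BD BZ Bx; apply: (big_ind B) => // i _; apply: BZ.
Qed.

Lemma subspaceB B x y : subspace B -> B x -> B y -> B (x - y).
Proof. by case=> _ BD BZ Bx By; rewrite -scaleN1r; apply: BD => //; apply: BZ. Qed.

(* phi_0, ..., phi_(c-1) are linear coordinates on B / A, with dual vectors w:
   a quotient of codimension c presented by explicit functionals. *)
Definition quotient_coords A B c (phi : 'I_c -> W -> K) (w : 'I_c -> W) :=
  [/\ forall k, scalar (phi k), forall k, B (w k),
      forall k l, phi k (w l) = (l == k)%:R &
      forall x, B x -> (A x <-> forall k, phi k x = 0)].

Lemma scalar_lincomb (phi : W -> K) n (a : 'I_n -> K) (x : 'I_n -> W) :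
  scalar phi -> phi (\sum_i a i *: x i) = \sum_i a i * phi (x i).
Proof.
move=> lin; have phi0 : phi 0 = 0.
  by have := lin (-1) 0 0; rewrite scaler0 addr0 mulN1r addNr.
elim/big_rec2: _ => // i y1 y2 _ <-; exact: lin.
Qed.

Section Coords.
Variables (A B : W -> Prop) (c : nat) (phi : 'I_c -> W -> K) (w : 'I_c -> W).
Hypotheses (subB : subspace B) (coords : quotient_coords A B phi w).

Lemma coords_lincomb (a : 'I_c -> K) k : phi k (\sum_l a l *: w l) = a k.
Proof.
case: coords => lin _ dual _; rewrite scalar_lincomb // (bigD1 k) //= big1.
  by rewrite dual eqxx mulr1 addr0.
by move=> l /negPf lk; rewrite dual lk mulr0.
Qed.

Lemma codim_of_coords : codim A B c.
Proof.
case: coords => lin Bw dual ker; exists w; split => //.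
  move=> a Aa k; rewrite -(coords_lincomb a k).
  exact: (proj1 (ker _ (subspace_lincomb a subB Bw)) Aa).
move=> b Bb; exists (fun k => phi k b).
apply/ker; first by apply: subspaceB => //; apply: subspace_lincomb.
move=> k; have := lin k (-1) (\sum_l phi l b *: w l) b.
rewrite scaleN1r coords_lincomb mulN1r => E.
by rewrite addrC E addNr.
Qed.

End Coords.

Lemma codim_ge_mod_line A B A0 n (phi : 'I_n.+1 -> W -> K) w (g : W) :
  subspace B -> quotient_coords A B phi w -> B g ->
  (forall x, B x -> A0 x -> exists t, A (x - t *: g)) -> codim_ge A0 B n.
Proof.
move=> subB coords Bg line; case: (coords) => lin Bw dual ker.
have [k gk] : exists k, forall j, phi k g = 0 -> phi j g = 0.
  case: (pickP (fun j => phi j g != 0)) => [k nz|zero].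
    by exists k => j gk0; move: nz; rewrite gk0 eqxx.
  by exists ord0 => j _; apply/eqP/negbFE/zero.
exists (fun i => w (lift k i)); split => [i|a A0a i]; first exact: Bw.
pose x := \sum_i a i *: w (lift k i).
have Bx : B x by apply: subspace_lincomb.
have phix j : phi j x = \sum_i a i * (lift k i == j)%:R.
  by rewrite scalar_lincomb //; apply: eq_bigr => i' _; rewrite dual.
have [t /ker Axt] := line x Bx A0a.
have {}Axt j : phi j x = t * phi j g.
  have Bxt : B (x - t *: g).
    by case: (subB) => _ _ BZ; exact: (subspaceB subB Bx (BZ t g Bg)).
  have := Axt Bxt j; have := lin j (- t) g x; rewrite scaleNr [- _ + _]addrC => ->.
  by rewrite mulNr addrC => /eqP; rewrite subr_eq0 => /eqP.
have xk : phi k x = 0.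
  by rewrite phix big1 // => i' _; rewrite eq_sym (negPf (neq_lift k i')) mulr0.
have -> : a i = phi (lift k i) x.
  rewrite phix (bigD1 i) //= eqxx mulr1 big1 ?addr0 // => i' /negPf ne.
  by rewrite (inj_eq (@lift_inj _ k)) ne mulr0.
rewrite Axt; have := Axt k; rewrite xk => /esym/eqP; rewrite mulf_eq0.
by case/orP => [/eqP ->|/eqP /gk ->]; rewrite ?mul0r ?mulr0.
Qed.

Lemma codim_ge_le A B c c' : subspace A -> codim A B c -> codim_ge A B c' ->
  (c' <= c)%N.
Proof.
move=> subA [w [_ _ span]] [w' [Bw' ind]].
have [a Ha] := fin_all_exists (fun j => span (w' j) (Bw' j)).
rewrite leqNgt; apply/negP => lt_c_c'.
pose M : 'M[K]_(c', c) := \matrix_(j, i) a j i.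
have : kermx M != 0.
  rewrite -mxrank_eq0 mxrank_ker -lt0n subn_gt0.
  exact: leq_ltn_trans (rank_leq_col M) lt_c_c'.
case/rowV0Pn => r /sub_kermxP rM; apply/negP; rewrite negbK; apply/eqP/rowP => j.
have rM0 i : \sum_j r 0 j * a j i = 0.
  move/rowP: (rM) => /(_ i); rewrite !mxE => E; rewrite -[RHS]E.
  by apply: eq_bigr => j' _; rewrite /M mxE.
have cancel : \sum_j r 0 j *: \sum_i a j i *: w i = 0.
  under eq_bigr do rewrite scaler_sumr; rewrite exchange_big /= big1 // => i _.
  by under eq_bigr do rewrite scalerA; rewrite -scaler_suml rM0 scale0r.
rewrite mxE; apply: ind; have -> : \sum_j r 0 j *: w' j =
    \sum_j r 0 j *: (w' j - \sum_i a j i *: w i).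
  by under [RHS]eq_bigr do rewrite scalerBr; rewrite sumrB cancel subr0.
exact: subspace_lincomb.
Qed.

Lemma codim_ge_weaken A B c c' : (c' <= c)%N -> codim_ge A B c -> codim_ge A B c'.
Proof.
move=> le [w [Bw ind]]; exists (fun i => w (widen_ord le i)); split => // a Aa i.
pose b (j : 'I_c) := if insub (val j) is Some i then a i else 0.
have bw : \sum_j b j *: w j = \sum_j a j *: w (widen_ord le j).
  rewrite (bigID (fun j : 'I_c => (j < c')%N)) /= [X in _ + X]big1 ?addr0.
    by rewrite (big_ord_narrow le); apply: eq_bigr => j _; rewrite /b /= valK.
  by move=> j /negPf ge; rewrite /b insubF ?ge ?scale0r.
by have := ind b; rewrite bw => /(_ Aa (widen_ord le i)); rewrite /b /= valK.
Qed.

Lemma codim_ext A A' B B' c : (forall x, A x <-> A' x) -> (forall x, B x <-> B' x) ->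
  codim A B c -> codim A' B' c.
Proof.
move=> AA' BB' [w [Bw ind span]]; exists w; split=> [i|a /AA'|b /BB' /span [a Aa]].
- exact/BB'.
- exact: ind.
- by exists a; apply/AA'.
Qed.

Lemma proper_of_codim_ge A B : (forall x, A x -> B x) -> codim_ge A B 1 ->
  proper_subspace A B.
Proof.
move=> AB [w [Bw ind]]; split => //; exists (w ord0); split => // Aw.
have := ind (fun _ => 1); rewrite big_ord1 scale1r => /(_ Aw ord0) /eqP.
by rewrite oner_eq0.
Qed.
End Quotients.

Section LineRestriction.
Variables (F : fieldType) (n : nat).
Local Notation Pn := {mpoly F[n]}.

Definition dirderiv (y : 'I_n -> F) (p : Pn) : Pn := \sum_i y i *: mderiv i p.

Lemma dirderivD y p q : dirderiv y (p + q) = dirderiv y p + dirderiv y q.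
Proof. by rewrite /dirderiv -big_split; apply: eq_bigr => i _; rewrite mderivD scalerDr. Qed.

Lemma dirderivM y p q : dirderiv y (p * q) = dirderiv y p * q + p * dirderiv y q.
Proof.
rewrite /dirderiv mulr_suml mulr_sumr -big_split; apply: eq_bigr => i _.
by rewrite mderivM scalerDr scalerAl scalerAr.
Qed.

Lemma dirderivC y c : dirderiv y c%:MP = 0.
Proof. by rewrite /dirderiv big1 // => i _; rewrite mderivC scaler0. Qed.

Lemma dirderivX y i : dirderiv y 'X_i = (y i)%:MP.
Proof.
have mderivXU j : mderiv j ('X_i : Pn) = (i == j)%:R%:MP.
  rewrite mderivX mnm1E; case: eqP => [->|_]; last by rewrite scale0r mpolyC0.
  have -> : (U_(j) - U_(j) = 0)%MM by apply/mnmP => k; rewrite mnmBE subnn mnmE.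
  by rewrite mpolyX0 scale1r mpolyC1.
rewrite /dirderiv (bigD1 i) //= big1 => [|j /negPf ji]; last first.
  by rewrite mderivXU eq_sym ji mpolyC0 scaler0.
by rewrite addr0 mderivXU eqxx -mul_mpolyC mulr1.
Qed.

Definition line_taylor x y (p : Pn) := exists r : {poly F},
  [/\ forall t, r.[t] = p.@[fun i => x i + t * y i],
      r`_0 = p.@[x] & r`_1 = (dirderiv y p).@[x]].

Lemma line_taylorC x y c : line_taylor x y c%:MP.
Proof.
exists c%:P; split.
- by move=> t; rewrite hornerC mevalC.
- by rewrite coefC mevalC.
- by rewrite coefC dirderivC meval0.
Qed.

Lemma line_taylorX x y i : line_taylor x y 'X_i.
Proof.
exists ((x i)%:P + (y i)%:P * 'X); split.
- by move=> t; rewrite hornerD hornerC hornerMX hornerC mevalXU mulrC.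
- by rewrite coefD coefC coefCM coefX mulr0 addr0 mevalXU.
- by rewrite coefD coefC coefCM coefX mulr1 add0r dirderivX mevalC.
Qed.

Lemma line_taylorD x y p q :
  line_taylor x y p -> line_taylor x y q -> line_taylor x y (p + q).
Proof.
move=> [r [r1 r2 r3]] [s [s1 s2 s3]]; exists (r + s); split.
- by move=> t; rewrite hornerD r1 s1 mevalD.
- by rewrite coefD r2 s2 mevalD.
- by rewrite coefD r3 s3 dirderivD mevalD.
Qed.

Lemma line_taylorM x y p q :
  line_taylor x y p -> line_taylor x y q -> line_taylor x y (p * q).
Proof.
move=> [r [r1 r2 r3]] [s [s1 s2 s3]]; exists (r * s); split.
- by move=> t; rewrite hornerM r1 s1 mevalM.
- by rewrite coefM big_ord1 r2 s2 mevalM.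
- rewrite coefM !big_ord_recr big_ord0 /= add0r r2 s2 r3 s3.
  by rewrite dirderivM mevalD !mevalM addrC.
Qed.

Lemma line_taylorP x y p : line_taylor x y p.
Proof.
have monomial m : line_taylor x y 'X_[m].
  rewrite mpolyXE_id; apply: (big_ind (line_taylor x y)).
  - by rewrite -mpolyC1; apply: line_taylorC.
  - exact: line_taylorM.
  move=> i _; elim: (m i) => [|k IHk]; first by rewrite expr0 -mpolyC1; apply: line_taylorC.
  by rewrite exprS; apply: line_taylorM => //; apply: line_taylorX.
rewrite [p]mpolyE; apply: (big_ind (line_taylor x y)).
- by rewrite -mpolyC0; apply: line_taylorC.
- exact: line_taylorD.
by move=> m _; rewrite -mul_mpolyC; apply: line_taylorM => //; apply: line_taylorC.
Qed.

Lemma homog_scale d (p : Pn) s x : p \is d.-homog ->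
  p.@[fun i => s * x i] = s ^+ d * p.@[x].
Proof.
move=> /dhomog_mf hd; rewrite !mevalE mulr_sumr; apply: eq_big_seq => m mi.
rewrite mulrCA; congr (_ * _); under eq_bigr do rewrite exprMn.
by rewrite big_split /= prodrXr -mdegE hd.
Qed.

Lemma mderiv_homog i d (p : Pn) : p \is d.+1.-homog -> mderiv i p \is d.-homog.
Proof.
move=> /dhomog_mf hd; rewrite [p]mpolyE big_seq raddf_sum; apply: rpred_sum => m mi.
change (mderiv i (p@_m *: 'X_[m]) \is d.-homog).
rewrite mderivZ mderivX; case: (posnP (m i)) => [->|mpos].
  by rewrite scale0r scaler0 dhomog0.
apply/dhomogZ/dhomogZ; rewrite dhomogX; apply/eqP.
have le : (U_(i) <= m)%MM by apply/mnm_lepP => j; rewrite mnm1E; case: eqP => [<-|].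
have E : mdeg m = d.+1 := hd m mi.
rewrite -(submK le) mdegD mdeg1 addn1 in E.
by case: E.
Qed.

Section CharZero.
Hypothesis charF : [pchar F] =i pred0.

(* In characteristic zero the naturals embed in F, which is thus infinite. *)
Lemma natr_inj : injective (fun k : nat => k%:R : F).
Proof.
have /pcharf0P natr0 := charF.
suff le_inj a b : (a <= b)%N -> a%:R = b%:R :> F -> a = b.
  move=> a b /= E; case: (leqP a b) => [le|/ltnW le]; first exact: le_inj.
  exact/esym/le_inj.
move=> le_ab; rewrite -(subnK le_ab) natrD -{1}(add0r a%:R) => /addIr/esym/eqP.
by rewrite natr0 => /eqP ->.
Qed.

Lemma poly_eq_on_all (r s : {poly F}) : (forall t, r.[t] = s.[t]) -> r = s.
Proof.
move=> rs; apply/eqP; rewrite -subr_eq0; apply: contraT => nz.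
have := max_poly_roots nz (rs := [seq k%:R | k <- iota 0 (size (r - s))]).
rewrite size_map size_iota ltnn; apply.
  by apply/allP => _ /mapP[k _ ->]; rewrite /root hornerD hornerN rs subrr.
by rewrite map_inj_uniq ?iota_uniq //; apply: natr_inj.
Qed.

Lemma dirderiv_line_vanish p x y :
  (forall t, p.@[fun i => x i + t * y i] = 0) -> (dirderiv y p).@[x] = 0.
Proof.
move=> p0; have [r [r1 _ r3]] := line_taylorP x y p.
rewrite -r3 (_ : r = 0) ?coef0 //.
by apply: poly_eq_on_all => t; rewrite r1 p0 horner0.
Qed.

Lemma coef_binomial_low d :
  (('X + 1 : {poly F}) ^+ d)`_0 = 1 /\ (('X + 1 : {poly F}) ^+ d)`_1 = d%:R.
Proof.
elim: d => [|d [c0 c1]]; first by rewrite expr0 !coef1.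
by rewrite exprS mulrDl mul1r !coefD !coefXM /= c0 c1 add0r -natr1 addrC.
Qed.

Lemma euler d p x : p \is d.-homog -> (dirderiv x p).@[x] = d%:R * p.@[x].
Proof.
move=> hp; have [r [r1 _ r3]] := line_taylorP x x p; rewrite -r3.
have -> : r = (p.@[x])%:P * ('X + 1) ^+ d.
  apply: poly_eq_on_all => t; rewrite r1 hornerM hornerC horner_exp hornerD hornerX hornerC.
  by rewrite mulrC -homog_scale //; apply: meval_eq => i /=; ring.
by rewrite coefCM (coef_binomial_low d).2 mulrC.
Qed.

(* At a smooth hypersurface {f = 0}, the derivative map y |-> D_y f is injective:
   by Euler, D_y f = 0 forces all partials of f to vanish at y. *)
Lemma dirderiv_inj d (f : Pn) y : f \is d.+2.-homog ->
  (forall x, (forall i, (mderiv i f).@[x] = 0) -> forall i, x i = 0) ->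
  dirderiv y f = 0 -> forall i, y i = 0.
Proof.
move=> hf smooth Dy0; apply: smooth => i.
have E : dirderiv y (mderiv i f) = mderiv i (dirderiv y f).
  rewrite /dirderiv raddf_sum; apply: eq_bigr => j _.
  by rewrite /= mderivZ mderiv_comm.
have := euler y (mderiv_homog i hf); rewrite E Dy0 raddf0 meval0 => /esym/eqP.
have /pcharf0P natr0 := charF.
by rewrite mulf_eq0 natr0 /= => /eqP.
Qed.
End CharZero.
End LineRestriction.

Section Quadrics.
Variable F : fieldType.
Local Notation V := 'rV[F]_7.
Local Notation P7 := {mpoly F[7]}.

Definition bilform (A : 'M[F]_7) (u v : V) : F := (u *m A *m v^T) 0 0.

Lemma bilformDl A u u' v : bilform A (u + u') v = bilform A u v + bilform A u' v.
Proof. by rewrite /bilform !mulmxDl mxE. Qed.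

Lemma bilformDr A u v v' : bilform A u (v + v') = bilform A u v + bilform A u v'.
Proof. by rewrite /bilform linearD /= mulmxDr mxE. Qed.

Lemma bilformDA A B u v : bilform (A + B) u v = bilform A u v + bilform B u v.
Proof. by rewrite /bilform mulmxDr mulmxDl mxE. Qed.

Lemma bilformZA a A u v : bilform (a *: A) u v = a * bilform A u v.
Proof. by rewrite /bilform -scalemxAr -scalemxAl mxE. Qed.

Lemma bilform_suml A n (s : 'I_n -> F) (u : 'I_n -> V) v :
  bilform A (\sum_i s i *: u i) v = \sum_i s i * bilform A (u i) v.
Proof.
rewrite /bilform !mulmx_suml summxE; apply: eq_bigr => i _.
by rewrite -!scalemxAl mxE.
Qed.

Lemma bilform_sumr A n (s : 'I_n -> F) u (v : 'I_n -> V) :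
  bilform A u (\sum_i s i *: v i) = \sum_i s i * bilform A u (v i).
Proof.
rewrite /bilform linear_sum mulmx_sumr summxE; apply: eq_bigr => i _.
by rewrite linearZ /= -scalemxAr mxE.
Qed.

Lemma bilform_delta i j u v : bilform (delta_mx i j) u v = u 0 i * v 0 j.
Proof.
rewrite /bilform mxE (bigD1 j) //= big1 => [|k /negPf kj]; last first.
  by rewrite !mxE big1 ?mul0r // => l _; rewrite mxE kj andbF mulr0.
rewrite !mxE addr0 (bigD1 i) //= big1 => [|l /negPf li]; last by rewrite mxE li mulr0.
by rewrite mxE !eqxx mulr1 addr0.
Qed.

Lemma mdeg2_monomial (m : 'X_{1..7}) : mdeg m = 2%N ->
  exists i j, forall x : 'I_7 -> F, ('X_[m] : P7).@[x] = x i * x j.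
Proof.
move=> dm; have [i mi] : exists i, (0 < m i)%N.
  apply/existsP; apply: contraT; rewrite negb_exists => /forallP m0.
  by move: dm; rewrite mdegE big1 // => k _; move: (m0 k); rewrite lt0n negbK => /eqP.
have le : (U_(i) <= m)%MM by apply/mnm_lepP => j; rewrite mnm1E; case: eqP => [<-|].
have E : mdeg m = 2%N := dm.
rewrite -(submK le) mdegD mdeg1 addn1 in E; case: E => /eqP /mdeg1P [j /eqP Ej].
by exists j, i => x; rewrite -(submK le) Ej mpolyXD mevalM !mevalXU.
Qed.

Lemma quadric_bilform (Q : P7) : Q \is 2.-homog ->
  exists A, forall v, Q.@[pt v] = bilform A v v.
Proof.
move=> /dhomog_mf hQ; rewrite [Q]mpolyE.
elim: (msupp Q) hQ => [|m s IH] hQ.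
  by exists 0 => v; rewrite big_nil meval0 /bilform mulmx0 mul0mx mxE.
have [|A HA] := IH; first by move=> m' m's; apply: hQ; rewrite inE m's orbT.
have [i [j Hij]] : exists i j, forall x, ('X_[m] : P7).@[x] = x i * x j.
  by apply: mdeg2_monomial; apply: (hQ m); rewrite inE eqxx.
exists (A + Q@_m *: delta_mx i j) => v.
by rewrite big_cons mevalD mevalZ Hij HA bilformDA bilformZA bilform_delta mulrA addrC.
Qed.

Lemma sum_skew n (c : 'I_n -> 'I_n -> F) : (forall i, c i i = 0) ->
  (forall i j : 'I_n, (i < j)%N -> c i j + c j i = 0) -> \sum_i \sum_j c i j = 0.
Proof.
elim: n c => [|n IH] c c0 cs; first by rewrite big_ord0.
rewrite big_ord_recr /= big_ord_recr /= c0 addr0.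
under eq_bigr do rewrite big_ord_recr /=.
rewrite big_split /= IH ?add0r => [|i|i j ij]; [|exact: c0|exact: cs].
by rewrite -big_split big1 // => i _; apply: cs; rewrite /= ltn_ord.
Qed.

Lemma quadric_vanish_span (Q : P7) n (u : 'I_n -> V) : Q \is 2.-homog ->
  (forall i, Q.@[pt (u i)] = 0) ->
  (forall i j : 'I_n, (i < j)%N -> Q.@[pt (u i + u j)] = 0) ->
  forall s, Q.@[pt (\sum_i s i *: u i)] = 0.
Proof.
move=> hQ Qu Quu s; have [A HA] := quadric_bilform hQ.
rewrite HA bilform_suml; under eq_bigr do rewrite bilform_sumr mulr_sumr.
apply: sum_skew => [i|i j ij].
  by have := Qu i; rewrite HA => ->; rewrite !mulr0.
have := Quu i j ij; have := Qu i; have := Qu j.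
rewrite !HA !bilformDl !bilformDr => -> ->; rewrite add0r addr0 => bij.
have -> : s i * (s j * bilform A (u i) (u j)) + s j * (s i * bilform A (u j) (u i)) =
  s i * s j * (bilform A (u i) (u j) + bilform A (u j) (u i)) by ring.
by rewrite bij mulr0.
Qed.

Definition linpoly (l : V -> F) : P7 := \sum_i l (delta_mx 0 i) *: 'X_i.

Lemma linpoly_eval (l : {scalar V}) v : (linpoly l).@[pt v] = l v.
Proof.
rewrite /linpoly raddf_sum {2}(row_sum_delta v) linear_sum; apply: eq_bigr => i _ /=.
by rewrite mevalZ mevalXU linearZ /= mulrC.
Qed.

Lemma linpolyM_homog (l l' : V -> F) : linpoly l * linpoly l' \is 2.-homog.
Proof.
have hom1 (k : V -> F) : linpoly k \is 1.-homog.
  by apply: rpred_sum => i _; apply/dhomogZ; rewrite dhomogX; apply/eqP; exact: mdeg1.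
exact: dhomogM (hom1 l) (hom1 l').
Qed.

(* The coefficient of s_i s_j in the restriction s |-> Q(sum_k s_k u_k) of a
   quadric Q: the value Q(u_i) on the diagonal, the polarization off it. *)
Definition quad_coord n (Q : P7) (u : 'I_n -> V) (i j : 'I_n) : F :=
  if i == j then Q.@[pt (u i)]
  else Q.@[pt (u i + u j)] - Q.@[pt (u i)] - Q.@[pt (u j)].

Lemma quad_coord_scalar n (u : 'I_n -> V) i j : scalar (fun Q : P7 => quad_coord Q u i j).
Proof. by move=> a Q R; rewrite /quad_coord; case: eqP => _; rewrite !mevalD !mevalZ; ring. Qed.

Lemma quad_coord0 n (Q : P7) (u : 'I_n -> V) (S : {vspace V}) i j :
  (forall v, v \in S -> Q.@[pt v] = 0) -> u i \in S -> u j \in S ->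
  quad_coord Q u i j = 0.
Proof.
move=> QS uiS ujS; rewrite /quad_coord !QS ?memvD //.
by case: eqP => _; rewrite ?subrr.
Qed.

Lemma quad_coord_dual n (y : 'I_n -> {scalar V}) (u : 'I_n -> V) (a b i j : 'I_n) :
  (forall k l, y k (u l) = (k == l)%:R) -> (a <= b)%N -> (i <= j)%N ->
  quad_coord (linpoly (y a) * linpoly (y b)) u i j = ((a == i) && (b == j))%:R.
Proof.
move=> dual le_ab le_ij; rewrite /quad_coord !mevalM !linpoly_eval !linearD /= !dual.
case: eqVneq => [<-|ne_ij]; first by rewrite -natrM mulnb.
have -> : ((a == i)%:R + (a == j)%:R) * ((b == i)%:R + (b == j)%:R)
    - (a == i)%:R * (b == i)%:R - (a == j)%:R * (b == j)%:R
  = (a == i)%:R * (b == j)%:R + (a == j)%:R * (b == i)%:R :> F by ring.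
have swap0 : ((a == j) && (b == i)) = false.
  apply/negbTE/negP => /andP[/eqP aj /eqP bi]; move: ne_ij.
  by rewrite -val_eqE eqn_leq le_ij -aj -bi le_ab.
by rewrite -!natrM !mulnb swap0 addr0.
Qed.
End Quadrics.

Section QuadricsThroughSubspaces.
Variable F : fieldType.
Local Notation V := 'rV[F]_7.
Local Notation P7 := {mpoly F[7]}.

Lemma L2_subspace (T : {vspace V}) : subspace (L2 T).
Proof.
split.
- by split=> [|v _]; rewrite ?dhomog0 ?meval0.
- move=> Q R [hQ QT] [hR RT]; split=> [|v vT]; first exact: dhomogD.
  by rewrite mevalD QT ?RT ?addr0.
- move=> a Q [hQ QT]; split=> [|v vT]; first exact: dhomogZ.
  by rewrite mevalZ QT ?mulr0.
Qed.

(* Every quadratic form vanishes at the origin. *)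
Lemma L2_zero (Q : P7) : L2 0 Q <-> H2 Q.
Proof.
split=> [[]//|hQ]; split=> // v; rewrite memv0 => /eqP ->.
have := homog_scale 0 (pt 0) hQ; rewrite expr0n mul0r => <-.
by apply: meval_eq => i; rewrite /pt mxE mul0r.
Qed.

Lemma L2pair_zero (P : {vspace V}) (Q : P7) : L2pair 0 P Q <-> L2 P Q.
Proof. by split=> [[]//|[hQ QP]]; split=> //; apply/L2_zero. Qed.

Lemma L2_linpolyM (T : {vspace V}) (l : V -> F) (l' : {scalar V}) :
  (forall v, v \in T -> l' v = 0) -> L2 T (linpoly l * linpoly l').
Proof.
move=> l'T; split=> [|v vT]; first exact: linpolyM_homog.
by rewrite mevalM linpoly_eval l'T ?mulr0.
Qed.

Section AdaptedCoordinates.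
Variables (S T : {vspace V}) (n d : nat) (u : 'I_n -> V) (y : 'I_n -> {scalar V}).
Hypotheses (uS : forall i, u i \in S)
  (spanS : forall v, v \in S -> exists s : 'I_n -> F, v = \sum_i s i *: u i)
  (uT : forall i : 'I_n, (i < d)%N -> u i \in T)
  (dual : forall k l, y k (u l) = (k == l)%:R)
  (yT : forall k : 'I_n, (d <= k)%N -> forall v, v \in T -> y k v = 0).

(* Monomials s_i s_j (i <= j) on S that are not forced to vanish on S :&: T. *)
Definition new_pairs : {set 'I_n * 'I_n} :=
  [set p : 'I_n * 'I_n | (p.1 <= p.2)%N && (d <= p.2)%N].

Lemma card_new_pairs : #|new_pairs| = (\sum_(d <= j < n) j.+1)%N.
Proof.
rewrite -sum1dep_card.
rewrite -(pair_big_dep xpredT (fun i j : 'I_n => (i <= j)%N && (d <= j)%N) (fun _ _ => 1%N)).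
rewrite (exchange_big_dep (fun j : 'I_n => (d <= j)%N)) /=; last by move=> i j _ /andP[].
rewrite big_geq_mkord; apply: eq_big => // j dj.
rewrite (eq_bigl (fun i : 'I_n => (i < j.+1)%N)) => [|i]; last by rewrite ltnS dj andbT.
by rewrite (big_ord_narrow (ltn_ord j)) sum1_card card_ord.
Qed.

Definition pair_coord (k : 'I_#|new_pairs|) (Q : P7) : F :=
  quad_coord Q u (enum_val k).1 (enum_val k).2.
Definition pair_quadric (k : 'I_#|new_pairs|) : P7 :=
  linpoly (y (enum_val k).1) * linpoly (y (enum_val k).2).

Lemma L2pair_quotient_coords :
  quotient_coords (L2pair T S) (L2 T) pair_coord pair_quadric.
Proof.
split=> [k|k|k l|Q [hQ QT]].
- exact: quad_coord_scalar.
- by apply: L2_linpolyM; apply: yT; have := enum_valP k; rewrite inE => /andP[].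
- have := enum_valP k; have := enum_valP l; rewrite !inE => /andP[le_l _] /andP[le_k _].
  rewrite /pair_coord /pair_quadric quad_coord_dual // -(inj_eq enum_val_inj).
  by case: (enum_val l) (enum_val k) => ? ? [? ?].
split=> [[_ [_ QS]] k|coord0]; first exact: (quad_coord0 QS (uS _) (uS _)).
have qc0 (i j : 'I_n) : (i <= j)%N -> quad_coord Q u i j = 0.
  move=> le_ij; case: (leqP d j) => [dj|jd].
    have pM : (i, j) \in new_pairs by rewrite inE le_ij dj.
    by have := coord0 (enum_rank_in pM (i, j)); rewrite /pair_coord enum_rankK_in.
  by apply: (quad_coord0 QT); apply: uT => //; apply: leq_ltn_trans le_ij jd.
have Qu i : Q.@[pt (u i)] = 0 by have := qc0 i i (leqnn _); rewrite /quad_coord eqxx.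
split=> //; split=> // v /spanS [s ->]; apply: quadric_vanish_span => // i j ij.
have := qc0 i j (ltnW ij); rewrite /quad_coord ifF ?Qu ?subr0 //.
by apply/negbTE; rewrite -val_eqE neq_ltn ij.
Qed.
End AdaptedCoordinates.
End QuadricsThroughSubspaces.

Section AdaptedBases.
Variable F : fieldType.
Local Notation V := 'rV[F]_7.

Lemma scalar_vanish_span (f : {scalar V}) (s : seq V) :
  {in s, forall x, f x = 0} -> forall v, v \in <<s>>%VS -> f v = 0.
Proof.
move=> f0 v /(coord_span (X := in_tuple s)) ->; rewrite linear_sum big1 // => i _.
by rewrite linearZ /= f0 ?mulr0 // mem_nth.
Qed.

Lemma coord_nth (Z : seq V) (k : 'I_(size Z)) m : free Z -> (m < size Z)%N ->
  coord (in_tuple Z) k Z`_m = (m == k)%:R.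
Proof. by move=> fZ lt_m; rewrite (coord_free (Ordinal lt_m)). Qed.

Lemma directv_capv0 (U W Z : {vspace V}) : (W <= Z)%VS -> (U :&: Z = 0)%VS ->
  directv (W + U).
Proof.
move=> WZ UZ; apply/directv_addP; apply/eqP; rewrite capvC -subv0 -UZ.
exact: capvS.
Qed.

Lemma adapted_basis (S T : {vspace V}) : exists X : seq V,
  exists y : 'I_(size X) -> {scalar V},
  [/\ basis_of S X, forall i : 'I_(size X), (i < \dim (S :&: T))%N -> X`_i \in T,
      forall k l : 'I_(size X), y k X`_l = (k == l)%:R &
      forall k : 'I_(size X), (\dim (S :&: T) <= k)%N -> forall v, v \in T -> y k v = 0].
Proof.
pose A := vbasis (S :&: T); pose B := vbasis (S :\: T); pose C := vbasis (T :\: S).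
have dirS : directv (S :&: T + (S :\: T)) := directv_capv0 (capvSr S T) (capv_diff S T).
have bX : basis_of S (A ++ B).
  by rewrite -{1}(addv_diff_cap S T) addvC; exact: cat_basis dirS (vbasisP _) (vbasisP _).
have dirT : directv (S :&: T + (T :\: S)) := directv_capv0 (capvSl S T) (capv_diff T S).
have bT : basis_of T (A ++ C).
  rewrite -{1}(addv_diff_cap T S) addvC /A capvC.
  exact: cat_basis dirT (vbasisP _) (vbasisP _).
have fZ : free ((A ++ B) ++ C).
  rewrite cat_free (basis_free bX) (basis_free (vbasisP _)) (span_basis bX).
  by rewrite (span_basis (vbasisP _)) (directv_capv0 (subvv S) (capv_diff T S)).
pose Z := (A ++ B) ++ C.
have le_XZ : (size (A ++ B) <= size Z)%N by rewrite [X in (_ <= X)%N]size_cat leq_addr.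
have ZX m : (m < size (A ++ B))%N -> Z`_m = (A ++ B)`_m by move=> lt_m; rewrite nth_cat lt_m.
have sA : size A = \dim (S :&: T) by rewrite size_tuple.
exists (A ++ B), (fun k => coord (in_tuple Z) (widen_ord le_XZ k)).
split=> // [i lt_i|k l|k dk v vT].
- have lt_iA : (i < size A)%N by rewrite sA.
  have : A`_i \in (S :&: T)%VS by exact/vbasis_mem/mem_nth.
  by rewrite nth_cat lt_iA memv_cap => /andP[].
- rewrite -ZX //; apply: etrans (coord_nth _ fZ (leq_trans (ltn_ord l) le_XZ)) _.
  by rewrite eq_sym -val_eqE.
apply: (scalar_vanish_span (s := A ++ C)); last by rewrite (span_basis bT).
move=> x; rewrite mem_cat => /orP[xA|xC].
  have lt_jA : (index x A < size A)%N by rewrite index_mem.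
  have lt_jX : (index x A < size (A ++ B))%N by rewrite size_cat ltn_addr.
  have xZ : x = Z`_(index x A) by rewrite ZX // nth_cat lt_jA nth_index.
  rewrite {1}xZ.
  apply: etrans (coord_nth _ fZ (leq_trans lt_jX le_XZ)) _.
  by rewrite /= ltn_eqF // (leq_trans lt_jA) // sA.
have lt_jZ : (size (A ++ B) + index x C < size Z)%N.
  by rewrite [X in (_ < X)%N]size_cat ltn_add2l index_mem.
have xZ : x = Z`_(size (A ++ B) + index x C).
  by rewrite nth_cat ltnNge leq_addr /= addKn nth_index.
rewrite {1}xZ.
apply: etrans (coord_nth _ fZ lt_jZ) _.
by rewrite /= gtn_eqF // ltn_addr.
Qed.
End AdaptedBases.

Section TwoSubspaces.
Variable F : fieldType.
Local Notation V := 'rV[F]_7.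
Local Notation P7 := {mpoly F[7]}.

Theorem L2pair_coords (T S : {vspace V}) :
  exists (phi : 'I_(\sum_(\dim (S :&: T) <= j < \dim S) j.+1) -> P7 -> F) w,
    quotient_coords (L2pair T S) (L2 T) phi w.
Proof.
have [X [y [bX XT dual yT]]] := adapted_basis S T.
rewrite (vector.size_basis (X := in_tuple X) bX) -card_new_pairs.
exists (pair_coord (d := \dim (S :&: T)) (fun i => X`_i)).
exists (pair_quadric (d := \dim (S :&: T)) y).
apply: L2pair_quotient_coords => // [i|v vS].
  by apply: (basis_mem bX); rewrite mem_nth.
exists (fun i => coord (in_tuple X) i v).
by apply: coord_span; rewrite (span_basis bX).
Qed.

Corollary codim_L2pair (T S : {vspace V}) :
  codim (L2pair T S) (L2 T) (\sum_(\dim (S :&: T) <= j < \dim S) j.+1).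
Proof.
have [phi [w coords]] := L2pair_coords T S.
exact: codim_of_coords (L2_subspace T) coords.
Qed.
End TwoSubspaces.

Section CubicPlanes.
Variable F : fieldType.
Hypothesis charF : [pchar F] =i pred0.
Local Notation V := 'rV[F]_7.
Local Notation P7 := {mpoly F[7]}.

Lemma line_complement (U P : {vspace V}) p : (U <= P)%VS -> p \in P -> p \notin U ->
  \dim P = (\dim U).+1 -> forall c, c \in P -> exists t, c - t *: p \in U.
Proof.
move=> UP pP pU dimP c cP.
have pUp : p \in (<[p]> + U)%VS by rewrite -[X in X \in _]addr0 memv_add ?memv_line ?mem0v.
have sub : (<[p]> + U <= P)%VS by rewrite subv_add -memvE pP.
have ltU : (\dim U < \dim (<[p]> + U))%N.
  rewrite (ltn_leqif (dimv_leqif_eq (addvSr _ _))).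
  by apply: contraNneq pU => ->.
have /eqP E : (<[p]> + U)%VS == P by rewrite eqEdim sub dimP.
move: cP; rewrite -E => /memv_addP[_ /vlineP[t ->] [l lU ->]].
by exists t; rewrite addrC addKr.
Qed.

Lemma dirderiv_pt_lin (p : P7) a u v :
  dirderiv (pt (a *: u + v)) p = a *: dirderiv (pt u) p + dirderiv (pt v) p.
Proof.
rewrite /dirderiv scaler_sumr -big_split; apply: eq_bigr => i _.
by rewrite /pt !mxE scalerDl scalerA.
Qed.

Lemma dirderiv_ptZ (p : P7) a u : dirderiv (pt (a *: u)) p = a *: dirderiv (pt u) p.
Proof.
rewrite /dirderiv scaler_sumr; apply: eq_bigr => i _.
by rewrite /pt !mxE scalerA.
Qed.

Lemma dirderiv_pt_sum (p : P7) n (a : 'I_n -> F) (u : 'I_n -> V) :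
  dirderiv (pt (\sum_k a k *: u k)) p = \sum_k a k *: dirderiv (pt (u k)) p.
Proof.
elim/big_rec2: _ => [|k v q _ <-]; last by rewrite dirderiv_pt_lin.
by rewrite /dirderiv big1 // => i _; rewrite /pt mxE scale0r.
Qed.

Lemma dgradE (f : P7) v w : dgrad f v w = (dirderiv (pt w) f).@[pt v].
Proof.
rewrite /dirderiv raddf_sum; apply: eq_bigr => i _.
by rewrite /= mevalZ mulrC.
Qed.

Section TangentSpace.
Variables (f : P7) (P : {vspace V}).

Lemma KP_subspace : subspace (KP P).
Proof.
split=> [v _|x y hx hy v vP|a x hx v vP]; first by rewrite mulmx0 mem0v.
  by rewrite mulmxDr memvD ?hx ?hy.
by rewrite -scalemxAr memvZ ?hx.
Qed.

Definition rank_one (l : V -> F) (c : V) : 'M[F]_7 := (\row_i l (delta_mx 0 i))^T *m c.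

Lemma rank_oneE (l : {scalar V}) c v : v *m rank_one l c = l v *: c.
Proof.
rewrite mulmxA [v *m _]mx11_scalar mul_scalar_mx; congr (_ *: _).
rewrite mxE {2}(row_sum_delta v) linear_sum; apply: eq_bigr => i _.
by rewrite !mxE linearZ.
Qed.

(* Smoothness of F_2(X) at [P]: if the tangent space has dimension m < dim P, every
   quadric of J_{X,2} through P is the derivative of f along a vector of P.
   Otherwise x |-> coord_k(x) c (c outside P) would give dim P independent
   tangent vectors. *)
Lemma J2_L2_dirderiv m : codim (KP P) (TF f P) m -> (m < \dim P)%N ->
  forall Q, J2 f Q -> L2 P Q -> exists2 c, c \in P & Q = dirderiv (pt c) f.
Proof.
move=> tangent ltm Q [a ->] [_ QP].
pose c : V := \row_i a i.
have Dc : dirderiv (pt c) f = \sum_i a i *: mderiv i f.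
  by apply: eq_bigr => i _; rewrite /pt mxE.
exists c; last by rewrite Dc.
apply: contraT => cP; suff : (\dim P <= m)%N by rewrite leqNgt ltm.
have := vbasisP P; move: (vbasis P) => X bX; apply: (codim_ge_le KP_subspace tangent).
exists (fun k => rank_one (coord X k) c); split=> [k v vP|b Kb j].
  by rewrite dgradE rank_oneE dirderiv_ptZ mevalZ Dc QP ?mulr0.
have XjP : X`_j \in P by apply: (basis_mem bX); rewrite mem_nth ?size_tuple.
have := Kb _ XjP; rewrite mulmx_sumr.
under eq_bigr do rewrite -scalemxAr rank_oneE /= (coord_free j _ (basis_free bX)) scalerA.
rewrite (bigD1 j) //= big1 => [|k /negPf kj]; last by rewrite eq_sym kj mulr0 scale0r.
rewrite eqxx mulr1 addr0 => bcP; apply/eqP; apply: contraT => bj.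
by move: cP; rewrite -(scalerK bj c) memvZ.
Qed.
End TangentSpace.

Section VanishingCubic.
Variables (f : P7) (P : {vspace V}).
Hypotheses (hf : f \is 3.-homog) (fP : forall v, v \in P -> f.@[pt v] = 0).

Lemma dirderiv_vanish c u : c \in P -> u \in P -> (dirderiv (pt c) f).@[pt u] = 0.
Proof.
move=> cP uP; apply: dirderiv_line_vanish => // t.
rewrite -(fP (memvD uP (memvZ t cP))); apply: meval_eq => i.
by rewrite /pt !mxE.
Qed.

Lemma L2_dirderiv c : c \in P -> L2 P (dirderiv (pt c) f).
Proof.
move=> cP; split=> [|u uP]; last exact: dirderiv_vanish.
by apply: rpred_sum => i _; apply/dhomogZ/mderiv_homog.
Qed.
End VanishingCubic.

Section SmoothCubic.
Variable f : P7.
Hypotheses (hf : f \is 3.-homog)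
  (smooth : forall x, (forall i, (mderiv i f).@[x] = 0) -> forall i, x i = 0).

Lemma dim_ge_J2_L2pair (P P' : {vspace V}) :
  (forall v, v \in P -> f.@[pt v] = 0) -> (forall v, v \in P' -> f.@[pt v] = 0) ->
  dim_ge (sub_inter (J2 f) (L2pair P P')) (\dim (P :&: P')).
Proof.
move=> fP fP'; have := vbasisP (P :&: P'); move: (vbasis _) => X bX.
exists (fun k => dirderiv (pt X`_k) f); split=> [k|a].
  have : X`_k \in (P :&: P')%VS by apply: (basis_mem bX); rewrite mem_nth ?size_tuple.
  rewrite memv_cap => /andP[kP kP']; split; first by exists (pt X`_k).
  by split; apply: L2_dirderiv.
rewrite -dirderiv_pt_sum => /(dirderiv_inj charF hf smooth) Xa0.
have : \sum_k a k *: X`_k = 0 by apply/rowP => i; rewrite mxE; apply: Xa0.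
by move: (basis_free bX) => /freeP; apply.
Qed.
End SmoothCubic.

(* For planes P, P' of X meeting in a line, with F_2(X) smooth of dimension 2 at
   [P]: modulo L2pair P P' the space (J_{X,2} :&: L2 P) is at most a line,
   spanned by D_p f (p in P \ P'), while L2 P / L2pair P P' has dimension 3. *)
Lemma codim_ge_J2_L2_L2pair (f : P7) (P P' : {vspace V}) : f \is 3.-homog ->
  is_plane P -> is_plane P' -> \dim (P :&: P') = 2%N ->
  (forall v, v \in P -> f.@[pt v] = 0) -> (forall v, v \in P' -> f.@[pt v] = 0) ->
  codim (KP P) (TF f P) 2 ->
  codim_ge (sub_sum (sub_inter (J2 f) (L2 P)) (L2pair P P')) (L2 P) 2.
Proof.
move=> hf plP plP' dI fP fP' tangent.
have := L2pair_coords P P'; rewrite capvC dI plP' big_nat1 => -[phi [w coords]].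
have [p pP pP'] : exists2 p, p \in P & p \notin P'.
  apply/subvPn; apply: contraTN isT => /capv_idPl PP'.
  by move: dI; rewrite PP' plP.
have [_ L2D _] := L2_subspace P; have [_ L2D' _] := L2_subspace P'.
apply: (codim_ge_mod_line (L2_subspace P) coords (L2_dirderiv hf fP pP)).
move=> _ _ [Qa [Qb [[JQa LQa] [LQb LQb'] ->]]].
have lt2P : (2 < \dim P)%N by rewrite plP.
have [c cP ->] := J2_L2_dirderiv tangent lt2P JQa LQa.
have pI : p \notin (P :&: P')%VS by rewrite memv_cap negb_and pP' orbT.
have dimP : \dim P = (\dim (P :&: P')).+1 by rewrite dI plP.
have [t] := line_complement (capvSl P P') pP pI dimP cP.
rewrite memv_cap => /andP[lP lP']; exists t.
have -> : dirderiv (pt c) f + Qb - t *: dirderiv (pt p) f =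
    dirderiv (pt (c - t *: p)) f + Qb.
  rewrite [c - _]addrC -[- (t *: p)]scaleNr dirderiv_pt_lin scaleNr.
  by rewrite addrAC (addrC (dirderiv (pt c) f)).
split; [apply: L2D => //; exact: L2_dirderiv hf fP _ lP|].
by apply: L2D' => //; exact: L2_dirderiv hf fP' _ lP'.
Qed.
End CubicPlanes.

Unset Implicit Arguments. Set Strict Implicit.

Theorem mainTheorem9 (F : closedFieldType) (hF : [pchar F] =i pred0) :
  (* (1) *)
  (forall P : {vspace 'rV[F]_7}, is_plane P -> codim (L2 P) (@H2 F) 6) /\
  (forall P P' : {vspace 'rV[F]_7}, is_plane P -> is_plane P' -> P != P' ->
     [/\ \dim (P :&: P') = 0%N -> codim (L2pair P P') (L2 P) 6,
         \dim (P :&: P') = 1%N -> codim (L2pair P P') (L2 P) 5 &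
         \dim (P :&: P') = 2%N -> codim (L2pair P P') (L2 P) 3]) /\
  (* (2) *)
  (forall f : {mpoly F[7]}, smooth_cubic f -> F2_smooth_surface f ->
     forall P P', inF2 f P -> inF2 f P' -> P != P' -> \dim (P :&: P') = 2%N ->
       dim_ge (sub_inter (J2 f) (L2pair P P')) 1 /\
       proper_subspace (sub_sum (sub_inter (J2 f) (L2 P)) (L2pair P P')) (L2 P)) /\
  for_general_cubic (fun f : {mpoly F[7]} => smooth_cubic f -> F2_smooth_surface f ->
     forall P P', inF2 f P -> inF2 f P' -> P != P' -> \dim (P :&: P') = 2%N ->
       dim_ge (sub_inter (J2 f) (L2pair P P')) 2 /\
       codim_ge (sub_sum (sub_inter (J2 f) (L2 P)) (L2pair P P')) (L2 P) 2).
Proof.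
have part2 (f : {mpoly F[7]}) : smooth_cubic f -> F2_smooth_surface f ->
    forall P P', inF2 f P -> inF2 f P' -> \dim (P :&: P') = 2%N ->
    dim_ge (sub_inter (J2 f) (L2pair P P')) 2 /\
    codim_ge (sub_sum (sub_inter (J2 f) (L2 P)) (L2pair P P')) (L2 P) 2.
  move=> [hf _ smooth] [_ F2s] P P' [plP fP] [plP' fP'] dI; split.
    by have := dim_ge_J2_L2pair hF hf smooth fP fP'; rewrite dI.
  by apply: (codim_ge_J2_L2_L2pair hF hf plP plP' dI fP fP' (F2s P (conj plP fP))).
split=> [P plP|].
  have := codim_L2pair 0 P; rewrite capv0 dimv0 plP (_ : \sum_(0 <= j < 3) j.+1 = 6)%N.
    by apply: codim_ext => Q; [apply: L2pair_zero | apply: L2_zero].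
  by rewrite unlock.
split=> [P P' _ plP' _|].
  have := codim_L2pair P P'; rewrite capvC plP' => cd.
  by split=> dI; move: cd; rewrite dI unlock.
split=> [f sm F2 P P' inP inP' _ dI|].
  have [dim2 codim2] := part2 f sm F2 P P' inP inP' dI; split.
    exact: codim_ge_weaken dim2.
  apply: proper_of_codim_ge (codim_ge_weaken _ codim2) => // _ [a [b [[_ La] [Lb _] ->]]].
  by have [_ L2D _] := L2_subspace P; apply: L2D.
exists 1; split; first by exists 0; rewrite dhomog0 meval1 oner_neq0.
by move=> f _ _ sm F2 P P' inP inP' _; apply: part2.
Qed.
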